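(* Let $n\in\mathbb{N}$ with $n\ge2$ and $I_n:=\int_{(0,\infty)^n}\mathrm{d}u\,\frac{|u|_1e^{-|u|_1}}{\prod_{j=1}^n(u_j+u_{j+1})}$, where $u_{n+1}:=u_1$ and $|u|_1:=u_1+\dots+u_n$. Then \[ I_n=\frac n2\int_{(0,\infty)^n}\mathrm{d}u\,\frac{e^{-|u|_1}}{\prod_{j=1}^{n-1}(u_j+u_{j+1})}. \] *)

From HB Require Import structures.
From mathcomp Require Import all_boot all_order all_algebra.
From mathcomp Require Import all_classical all_reals all_analysis.
Set Implicit Arguments. Unset Strict Implicit. Unset Printing Implicit Defensive.
Import Order.TTheory GRing.Theory Num.Theory.
Local Open Scope classical_set_scope.
Local Open Scope ring_scope.

(* [iint_pos n f] is the integral of f : R^n -> [0,+oo] over (0,oo)^n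
   w.r.t. n-dimensional Lebesgue measure, written as the iterated Lebesgue
   integral (equal to the product-measure integral for nonnegative
   measurable integrands by Tonelli).  A point u of R^n is represented by
   the sequence [:: u_1; ...; u_n] (so u_{j+1} = nth 0 u j). *)
Fixpoint iint_pos (R : realType) (n : nat) (f : seq R -> \bar R) : \bar R :=
  match n with
  | 0 => f [::]
  | m.+1 => (\int[@lebesgue_measure R]_(x in `]0%R, +oo[) iint_pos m (fun s => f (x :: s)))%E
  end.

Definition l1 (R : realType) (n : nat) (u : seq R) : R :=
  \sum_(j < n) nth 0 u j.

Definition cyc_prod (R : realType) (n : nat) (u : seq R) : R :=
  \prod_(j < n) (nth 0 u j + nth 0 u ((j.+1) %% n)).

Definition path_prod (R : realType) (n : nat) (u : seq R) : R :=
  \prod_(j < n.-1) (nth 0 u j + nth 0 u j.+1).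

Definition In_integrand (R : realType) (n : nat) (u : seq R) : \bar R :=
  ((l1 n u * expR (- l1 n u)) / cyc_prod n u)%:E.

Definition rhs_integrand (R : realType) (n : nat) (u : seq R) : \bar R :=
  (expR (- l1 n u) / path_prod n u)%:E.

From HB Require Import structures.
From mathcomp Require Import all_boot all_order all_algebra.
From mathcomp Require Import all_classical all_reals all_analysis.
From mathcomp Require Import measurable_realfun.
From mathcomp Require Import ring.
Import Order.TTheory GRing.Theory Num.Theory.
Local Open Scope classical_set_scope.
Local Open Scope ring_scope.

(* Since |u|_1 = 1/2 sum_j (u_j + u_{j+1}), the integrand of I_n splits into
   the n terms e^{-|u|_1} / (2 prod_{i <> j} (u_i + u_{i+1})).  The cyclic
   shift of the coordinates preserves the iterated integral over (0,oo)^n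
   (Tonelli) and permutes these terms, so they all have the same integral;
   the term with j = n is half the right-hand integrand. *)

Section IteratedIntegral.
Variable R : realType.
Local Notation RR := (measurableTypeR R).
Local Notation mu := (@lebesgue_measure R).
Local Notation Ipos := (`]0%R, +oo[%classic : set RR).

(* To apply Tonelli, [iint_pos n] is transported to the measurable space
   R * (R * ... (R * unit)); its display depends on n, hence the sigma type. *)
Fixpoint prodR_def (n : nat) : {d : measure_display & measurableType d} :=
  match n with
  | 0 => existT _ _ (unit : measurableType _)
  | m.+1 => existT _ _ ((RR * projT2 (prodR_def m))%type : measurableType _)
  end.
Definition prodR n : measurableType _ := projT2 (prodR_def n).

Fixpoint of_seq (n : nat) : seq R -> prodR n :=
  match n return seq R -> prodR n with
  | 0 => fun _ => tt
  | m.+1 => fun s => ((head 0 s : RR), of_seq m (behead s))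
  end.

Fixpoint to_seq n : prodR n -> seq R :=
  match n return prodR n -> seq R with
  | 0 => fun _ => [::]
  | m.+1 => fun p => (p.1 : R) :: to_seq m p.2
  end.
Arguments to_seq {n}.

Lemma of_seqK n s : size s = n -> to_seq (of_seq n s) = s.
Proof. by elim: n s => [|m IH] [|x s] //= [/IH ->]. Qed.

Lemma size_to_seq n (p : prodR n) : size (to_seq p) = n.
Proof. by elim: n p => [|m IH] p //=; rewrite IH. Qed.

Lemma measurable_nth_to_seq n i :
  measurable_fun setT (fun p : prodR n => nth 0 (to_seq p) i).
Proof.
elim: n i => [|m IH] [|i] /=; rewrite ?nth_nil; try exact: measurable_cst.
  exact: measurable_fst.
exact: measurableT_comp (IH i) measurable_snd.
Qed.

Definition iint n (F : prodR n -> \bar R) := iint_pos n (F \o of_seq n).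
Arguments iint {n}.

Lemma iintS m (F : prodR m.+1 -> \bar R) :
  iint F = (\int[mu]_(x in Ipos) iint (fun p : prodR m => F (x, p)))%E.
Proof. by []. Qed.

Lemma iint_posE n (f : seq R -> \bar R) (F : prodR n -> \bar R) :
  (forall s, size s = n -> (forall i, (i < n)%N -> 0 < nth 0 s i) ->
     f s = F (of_seq n s)) ->
  iint_pos n f = iint F.
Proof.
elim: n f F => [|m IH] f F fF; first exact: fF.
rewrite iintS /=; apply: eq_integral => x; rewrite inE /= in_itv /= andbT => x0.
apply: IH => s sz spos; apply: fF => [|[|i] //=]; first by rewrite /= sz.
exact: spos.
Qed.

Lemma iint_ge0 n (F : prodR n -> \bar R) :
  (forall p, 0 <= F p)%E -> (0 <= iint F)%E.
Proof.
elim: n F => [|m IH] F F0; first exact: F0.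
by rewrite iintS; apply: integral_ge0 => x _; apply: IH.
Qed.

Lemma measurable_Ipos : measurable Ipos.
Proof. exact: measurable_itv. Qed.

Lemma measurable_iint n d (Q : measurableType d) (F : Q * prodR n -> \bar R) :
  measurable_fun setT F -> (forall z, 0 <= F z)%E ->
  measurable_fun setT (fun q => iint (fun p => F (q, p))).
Proof.
elim: n d Q F => [|m IH] d Q F mF F0; first exact: measurable_fun_pair1 mF.
pose F' (z : (Q * RR) * prodR m) := F (z.1.1, ((z.1.2, z.2) : prodR m.+1)).
have mF' : measurable_fun setT F'.
  apply: measurableT_comp mF _; apply: measurable_fun_pair.
    exact: measurableT_comp measurable_fst measurable_fst.
  apply: measurable_fun_pair; last exact: measurable_snd.
  exact: measurableT_comp measurable_snd measurable_fst.
pose G z := iint (fun p => F' (z, p)); pose G' := G \_ (setT `*` Ipos).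
have mG' : measurable_fun setT G'.
  apply/(measurable_restrictT _ _).1.
    exact: measurableX measurableT measurable_Ipos.
  apply: measurable_funTS; exact: (IH _ _ F' mF' (fun z => F0 _)).
have G'0 z : (0 <= G' z)%E.
  by rewrite /G' /patch; case: ifP => // _; apply: iint_ge0 => p; exact: F0.
have := measurable_fun_fubini_tonelli_F (m2:=mu) _ mG' G'0.
apply: eq_measurable_fun => q _.
rewrite /fubini_F iintS [RHS]integral_mkcond; apply: eq_integral => x _.
rewrite /G' /patch /=; congr (if _ then _ else _).
by apply/idP/idP; rewrite !inE => //= -[].
Qed.

Lemma iint_sum n (I : Type) (s : seq I) (F : I -> prodR n -> \bar R) :
  (forall i, measurable_fun setT (F i)) -> (forall i p, 0 <= F i p)%E ->
  iint (fun p => \sum_(i <- s) F i p)%E = (\sum_(i <- s) iint (F i))%E.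
Proof.
elim: n F => [|m IH] F mF F0; first exact: eq_bigr.
rewrite iintS; transitivity
  (\int[mu]_(x in Ipos) \sum_(i <- s) iint (fun p => F i (x, p)))%E.
  apply: eq_integral => x _; apply: IH => [i|i p]; last exact: F0.
  exact: measurable_fun_pair2 (mF i).
rewrite ge0_integral_sum // => [i|i x _]; last exact: iint_ge0.
by apply: measurable_funTS; apply: measurable_iint (mF i) (F0 i).
Qed.

Lemma integral_Ipos_swap (G : RR * RR -> \bar R) :
  measurable_fun setT G -> (forall z, 0 <= G z)%E ->
  (\int[mu]_(x in Ipos) \int[mu]_(y in Ipos) G (x, y) =
   \int[mu]_(y in Ipos) \int[mu]_(x in Ipos) G (x, y))%E.
Proof.
move=> mG G0.
pose G' z := if (z.1 \in Ipos) && (z.2 \in Ipos) then G z else 0%E.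
have mG' : measurable_fun setT G'.
  have : measurable_fun setT (G \_ (Ipos `*` Ipos)).
    apply/(measurable_restrictT _ _).1; last exact: measurable_funTS.
    exact: measurableX measurable_Ipos measurable_Ipos.
  apply: eq_measurable_fun => -[x y] _; rewrite /patch /G'.
  by congr (if _ then _ else _); apply/idP/andP; rewrite !inE /= => -[].
have G'0 z : (0 <= G' z)%E by rewrite /G'; case: ifP.
have mkcond2 (H : RR -> RR -> \bar R) :
    (\int[mu]_(x in Ipos) \int[mu]_(y in Ipos) H x y =
     \int[mu]_x \int[mu]_y if (x \in Ipos) && (y \in Ipos) then H x y else 0)%E.
  rewrite integral_mkcond; apply: eq_integral => x _; rewrite /patch.
  by case: ifPn => _; [rewrite [LHS]integral_mkcond | rewrite integral0].
rewrite mkcond2 (mkcond2 (fun y x => G (x, y))).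
rewrite (fubini_tonelli (m1:=mu) (m2:=mu) _ mG' G'0).
by apply: eq_integral => y _; apply: eq_integral => x _; rewrite /G' andbC.
Qed.

Fixpoint snoc m : prodR m -> RR -> prodR m.+1 :=
  match m return prodR m -> RR -> prodR m.+1 with
  | 0 => fun _ x => ((x, tt) : prodR 1)
  | k.+1 => fun p x => ((p.1, snoc k p.2 x) : prodR k.+2)
  end.
Arguments snoc {m}.

Lemma to_seq_snoc m (p : prodR m) x : to_seq (snoc p x) = rcons (to_seq p) x.
Proof. by elim: m p => [|m IH] p //; exact: (congr1 (cons p.1) (IH p.2)). Qed.

Lemma measurable_snoc m :
  measurable_fun setT (fun z : prodR m * RR => snoc z.1 z.2).
Proof.
elim: m => [|m IH] /=.
  exact: measurable_fun_pair measurable_snd (measurable_cst _).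
apply: measurable_fun_pair.
  exact: measurableT_comp measurable_fst measurable_fst.
have mtail : measurable_fun setT (fun z : prodR m.+1 * RR => (z.1.2, z.2)).
  apply: measurable_fun_pair; last exact: measurable_snd.
  exact: measurableT_comp measurable_snd measurable_fst.
exact: measurableT_comp IH mtail.
Qed.

Lemma integral_iint_snoc m (F : prodR m.+1 -> \bar R) :
  measurable_fun setT F -> (forall p, 0 <= F p)%E ->
  (\int[mu]_(x in Ipos) iint (fun p => F (snoc p x)))%E = iint F.
Proof.
elim: m F => [|m IH] F mF F0; first by [].
rewrite [RHS]iintS.
under eq_integral => x _ do rewrite iintS.
pose G (z : RR * RR) :=
  iint (fun p : prodR m => F ((z.2, snoc p z.1) : prodR m.+2)).
have mG : measurable_fun setT G.
  pose F' (w : (RR * RR) * prodR m) := F ((w.1.2, snoc w.2 w.1.1) : prodR m.+2).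
  have mF' : measurable_fun setT F'.
    apply: measurableT_comp mF _; apply: measurable_fun_pair.
      exact: measurableT_comp measurable_snd measurable_fst.
    have mlast :
        measurable_fun setT (fun w : (RR * RR) * prodR m => (w.2, w.1.1)).
      apply: measurable_fun_pair; first exact: measurable_snd.
      exact: measurableT_comp measurable_fst measurable_fst.
    exact: measurableT_comp (measurable_snoc m) mlast.
  exact: (@measurable_iint m _ _ F' mF' (fun w => F0 _)).
have G0 z : (0 <= G z)%E by apply: iint_ge0 => p; exact: F0.
rewrite (integral_Ipos_swap _ mG G0); apply: eq_integral => y _.
by apply: (IH (fun q => F (y, q))) => //; exact: measurable_fun_pair2 mF.
Qed.

Definition rot m (p : prodR m.+1) : prodR m.+1 := snoc p.2 p.1.
Arguments rot {m}.

Lemma iint_rot m (F : prodR m.+1 -> \bar R) :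
  measurable_fun setT F -> (forall p, 0 <= F p)%E ->
  iint (F \o rot) = iint F.
Proof. by move=> mF F0; rewrite iintS -integral_iint_snoc. Qed.

Lemma nth_to_seq_rot m (p : prodR m.+1) (i : 'I_m.+1) :
  nth 0 (to_seq (rot p)) i = nth 0 (to_seq p) (ordS i).
Proof.
rewrite to_seq_snoc /= nth_rcons size_to_seq.
case: i => i /=; rewrite ltnS leq_eqVlt => /predU1P[->|im].
  by rewrite ltnn eqxx modnn.
by rewrite im modn_small.
Qed.

End IteratedIntegral.
Arguments to_seq {R n}.
Arguments iint {R n}.
Arguments rot {R m}.
Arguments nth_to_seq_rot {R m}.

Section CyclicDecomposition.
Variable R : realType.

Definition cyc_prod_omit n (j : 'I_n) (u : seq R) :=
  \prod_(i < n | i != j) (nth 0 u i + nth 0 u (i.+1 %% n)).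
Arguments cyc_prod_omit {n}.

(* Written as an exponential so that it is nonnegative and measurable on all
   of R^n; [omit_termE] gives its value at points with positive coordinates. *)
Definition omit_term n (j : 'I_n) (u : seq R) :=
  expR (- l1 n u - ln (2 * cyc_prod_omit j u)).
Arguments omit_term {n}.

Lemma omit_termE n (j : 'I_n) (u : seq R) :
  (forall i, (i < n)%N -> 0 < nth 0 u i) ->
  omit_term j u = expR (- l1 n u) / (2 * cyc_prod_omit j u).
Proof.
move=> u_gt0; have prod_gt0 : 0 < 2 * cyc_prod_omit j u.
  rewrite mulr_gt0 // prodr_gt0 // => i _.
  by rewrite addr_gt0 ?u_gt0 // ltn_pmod // (leq_ltn_trans _ (ltn_ord i)).
by rewrite /omit_term expRD (expRN (ln _)) lnK // posrE.
Qed.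

Lemma In_integrand_decomp n (u : seq R) : (0 < n)%N ->
  (forall i, (i < n)%N -> 0 < nth 0 u i) ->
  l1 n u * expR (- l1 n u) / cyc_prod n u = \sum_(j < n) omit_term j u.
Proof.
move=> n_gt0 u_gt0.
pose a (j : 'I_n) := nth 0 u j + nth 0 u (j.+1 %% n).
have a_gt0 j : 0 < a j by rewrite addr_gt0 ?u_gt0 ?ltn_pmod.
have cyc_prodE j : cyc_prod n u = a j * cyc_prod_omit j u.
  by rewrite /cyc_prod (bigD1 j).
have omit_gt0 (j : 'I_n) : 0 < cyc_prod_omit j u.
  by rewrite prodr_gt0 // => i _; exact: a_gt0.
have sum_a : \sum_(j < n) a j = 2 * l1 n u.
  have shift : \sum_(j < n) nth 0 u (j.+1 %% n) = l1 n u.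
    by rewrite /l1 [RHS](reindex_inj (@ordS_inj n)).
  by rewrite big_split /= shift -/(l1 n u); ring.
have cyc_prod_neq0 : cyc_prod n u != 0.
  by rewrite (cyc_prodE (Ordinal n_gt0)) mulf_neq0 // gt_eqF.
transitivity (\sum_(j < n) expR (- l1 n u) / (2 * cyc_prod n u) * a j).
  by rewrite -mulr_sumr sum_a; field.
apply: eq_bigr => j _; rewrite omit_termE // (cyc_prodE j); field.
by rewrite !gt_eqF.
Qed.

Lemma rhs_integrand_decomp m (u : seq R) :
  (forall i, (i < m.+1)%N -> 0 < nth 0 u i) ->
  expR (- l1 m.+1 u) / path_prod m.+1 u = omit_term (@ord_max m) u *+ 2.
Proof.
move=> u_gt0; rewrite omit_termE //.
have -> : cyc_prod_omit (@ord_max m) u = path_prod m.+1 u.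
  rewrite /cyc_prod_omit /path_prod big_mkcond big_ord_recr /= eqxx mulr1.
  apply: eq_bigr => i _.
  rewrite -val_eqE /= neq_ltn ltn_ord /= modn_small //.
  by rewrite ltnS.
have : 0 < path_prod m.+1 u.
  by rewrite prodr_gt0 // => i _; rewrite addr_gt0 // u_gt0 // ltnS // ltnW.
by rewrite mulr2n => /gt_eqF/negbT ?; field.
Qed.

Definition eomit_term n (j : 'I_n) (p : prodR R n) : \bar R :=
  (omit_term j (to_seq p))%:E.
Arguments eomit_term {n}.

Lemma eomit_term_ge0 n (j : 'I_n) p : (0 <= eomit_term j p)%E.
Proof. by rewrite lee_fin expR_ge0. Qed.

Lemma measurable_eomit_term n (j : 'I_n) : measurable_fun setT (eomit_term j).
Proof.
apply/measurable_EFinP; apply: measurableT_comp (@measurable_expR R) _.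
apply: measurable_funB.
  apply: measurable_funN; apply: measurable_sum => i.
  exact: measurable_nth_to_seq.
apply: measurableT_comp (@measurable_ln R) _.
apply: measurable_funM; first exact: measurable_cst.
have : measurable_fun setT (fun p : prodR R n => \prod_(i < n)
    if i != j then nth 0 (to_seq p) i + nth 0 (to_seq p) (i.+1 %% n) else 1).
  apply: measurable_prod => i _; case: (i != j); last exact: measurable_cst.
  by apply: measurable_funD; exact: measurable_nth_to_seq.
by apply: eq_measurable_fun => p _; rewrite /cyc_prod_omit [RHS]big_mkcond.
Qed.

Lemma eomit_term_rot m (j : 'I_m.+1) (p : prodR R m.+1) :
  eomit_term j (rot p) = eomit_term (ordS j) p.
Proof.
rewrite /eomit_term /omit_term /l1 /cyc_prod_omit.
have nth_succ (i : 'I_m.+1) :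
    nth 0 (to_seq (rot p)) (i.+1 %% m.+1) = nth 0 (to_seq p) (ordS (ordS i)).
  exact (nth_to_seq_rot p (ordS i)).
congr (expR (- _ - ln (2 * _)))%:E.
  under eq_bigr do rewrite nth_to_seq_rot.
  by rewrite [RHS](reindex_inj (@ordS_inj m.+1)).
under eq_bigr do rewrite nth_to_seq_rot nth_succ.
rewrite [RHS](reindex_inj (@ordS_inj m.+1)).
by apply: eq_bigl => i; rewrite (inj_eq (@ordS_inj m.+1)).
Qed.

Lemma iint_eomit_term m (j : 'I_m.+1) :
  iint (eomit_term j) = iint (eomit_term (@ord0 m)).
Proof.
case: j => k; elim: k => [|k IH] k_lt.
  by congr (iint (eomit_term _)); apply: val_inj.
have -> : Ordinal k_lt = ordS (Ordinal (ltnW k_lt)).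
  by apply: val_inj; rewrite /= modn_small.
rewrite -(IH (ltnW k_lt)) -[RHS]iint_rot; last exact: eomit_term_ge0.
  by congr iint; apply/funext => p /=; rewrite eomit_term_rot.
exact: measurable_eomit_term.
Qed.

End CyclicDecomposition.
Arguments eomit_term {R n}.

Theorem lemma4p27 (R : realType) (n : nat) (hn : (2 <= n)%N) :
  iint_pos n (In_integrand (R:=R) n) =
  ((n%:R / 2 : R)%:E * iint_pos n (rhs_integrand (R:=R) n))%E.
Proof.
case: n hn => [//|m] _.
have -> : iint_pos m.+1 (In_integrand (R:=R) m.+1) =
    iint (fun p => \sum_(j < m.+1) eomit_term j p)%E.
  apply: iint_posE => s s_size s_gt0.
  rewrite /In_integrand In_integrand_decomp // -sumEFin.
  by apply: eq_bigr => j _; rewrite /eomit_term of_seqK.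
have -> : iint_pos m.+1 (rhs_integrand (R:=R) m.+1) =
    iint (fun p => \sum_(i < 2) eomit_term (@ord_max m) p)%E.
  apply: iint_posE => s s_size s_gt0.
  rewrite /rhs_integrand rhs_integrand_decomp // big_ord_recr big_ord1 /=.
  by rewrite /eomit_term of_seqK // -EFinD mulr2n.
rewrite !iint_sum => [|*|*|*|*]; last 4 first.
- exact: measurable_eomit_term.
- exact: eomit_term_ge0.
- exact: measurable_eomit_term.
- exact: eomit_term_ge0.
under eq_bigr do rewrite iint_eomit_term.
rewrite iint_eomit_term !sumr_const !card_ord.
have natmulE (x : \bar R) k : x *+ k = ((k%:R)%:E * x)%E by rewrite mule_natl.
by rewrite !natmulE muleA -EFinM divfK // pnatr_eq0.
Qed.
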